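(* For every integer $n\ge 2$, \[ x\sum_{k=1}^{n}\binom{n}{k}\,{}_{H}w_{k}(x)=(x+1)\,{}_{H}w_{n}(x)-(x+1)\,w_{n-1}(x). \]
   Context: $\genfrac{\{}{\}}{0pt}{}{n}{k}$ denotes the Stirling numbers of the second kind. The geometric polynomials are $w_n(x)=\sum_{k=0}^{n}\genfrac{\{}{\}}{0pt}{}{n}{k}k!\,x^k$. With $H_k=\sum_{i=1}^k 1/i$, the harmonic geometric polynomials are ${}_{H}w_n(x)=\sum_{k=1}^{n}\genfrac{\{}{\}}{0pt}{}{n}{k}k!\,H_k\,x^k$. *)

From mathcomp Require Import all_boot all_order all_algebra.
Set Implicit Arguments. Unset Strict Implicit. Unset Printing Implicit Defensive.
Import GRing.Theory Num.Theory.
Local Open Scope ring_scope.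

Fixpoint stirling2 (n k : nat) : nat :=
  match n, k with
  | 0%N, 0%N => 1%N
  | 0%N, _.+1 => 0%N
  | _.+1, 0%N => 0%N
  | n'.+1, k'.+1 => (k'.+1 * stirling2 n' k'.+1 + stirling2 n' k')%N
  end.

Definition harmonic {R : numFieldType} (k : nat) : R :=
  \sum_(1 <= i < k.+1) (i%:R)^-1.

Definition geom_poly {R : numFieldType} (n : nat) (x : R) : R :=
  \sum_(0 <= k < n.+1) (stirling2 n k * k`!)%:R * x ^+ k.

Definition harm_geom_poly {R : numFieldType} (n : nat) (x : R) : R :=
  \sum_(1 <= k < n.+1) (stirling2 n k * k`!)%:R * harmonic k * x ^+ k.

From mathcomp Require Import all_boot all_order all_algebra.
From mathcomp Require Import ring.
Set Implicit Arguments. Unset Strict Implicit. Unset Printing Implicit Defensive.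
Import GRing.Theory Num.Theory.
Local Open Scope ring_scope.

(* Both polynomials are Stirling sums s_n(c) = sum_k S(n,k) k! c_k, with c_k = x^k
   and c_k = H_k x^k.  The identity sum_j C(n,j) S(j,k) = S(n+1,k+1) turns the
   binomial sum sum_j C(n,j) s_j(c) into sum_k S(n+1,k+1) k! c_k, and the
   recurrence S(n+1,k+1) k! = S(n,k+1) (k+1)! + S(n,k) k! splits x times this
   into a shifted copy of s_n plus x s_n.  For c_k = x^k this gives
   x sum_j C(n,j) w_j = (x+1) w_n when n >= 1; for c_k = H_k x^k the shift
   costs, by (k+1)! H_k = (k+1)! H_(k+1) - k!, exactly x sum_j C(n-1,j) w_j,
   so that x sum_j C(n,j) Hw_j = (x+1) Hw_n - x sum_j C(n-1,j) w_j, and the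
   two identities combine. *)

Lemma stirling2SS n k :
  stirling2 n.+1 k.+1 = (k.+1 * stirling2 n k.+1 + stirling2 n k)%N.
Proof. by []. Qed.

Lemma stirling2S0 n : stirling2 n.+1 0 = 0%N.
Proof. by []. Qed.

Lemma stirling2_small n k : (n < k)%N -> stirling2 n k = 0%N.
Proof. by elim: n k => [|n IHn] [|k] //= ltnk; rewrite !IHn ?muln0 // ltnW. Qed.

Lemma sum_binS (f : nat -> nat) n :
  (\sum_(0 <= j < n.+2) 'C(n.+1, j) * f j =
   \sum_(0 <= j < n.+1) 'C(n, j) * f j + \sum_(0 <= j < n.+1) 'C(n, j) * f j.+1)%N.
Proof.
rewrite big_nat_recl // [X in _ = (X + _)%N]big_nat_recl // !bin0 -addnA.
under eq_bigr => j _ do rewrite binS mulnDl.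
by rewrite big_split /= big_nat_recr //= bin_small // mul0n addn0.
Qed.

Lemma stirling2_binomial_sum n k :
  (\sum_(0 <= j < n.+1) 'C(n, j) * stirling2 j k)%N = stirling2 n.+1 k.+1.
Proof.
elim: n k => [|n IHn] k.
  by rewrite big_nat1 bin0 mul1n; case: k => //= k; rewrite muln0.
rewrite sum_binS IHn; case: k => [|k].
  by rewrite big1 => [|j _]; rewrite /= ?mul1n ?addn0 ?muln0.
under eq_bigr => j _ do rewrite stirling2SS mulnDr mulnCA.
by rewrite big_split -big_distrr !IHn [RHS]stirling2SS addnA -mulSn.
Qed.

Lemma stirling2S_fact n k :
  (stirling2 n.+1 k.+1 * k`! = stirling2 n k.+1 * k.+1`! + stirling2 n k * k`!)%N.
Proof. by rewrite stirling2SS mulnDl factS mulnCA mulnA. Qed.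

Section StirlingFactSum.

Variable R : pzSemiRingType.

Definition stirling_fact_sum n (c : nat -> R) : R :=
  \sum_(0 <= k < n.+1) (stirling2 n k * k`!)%:R * c k.

Lemma stirling_fact_sum_widen n N c : (n < N)%N ->
  stirling_fact_sum n c = \sum_(0 <= k < N) (stirling2 n k * k`!)%:R * c k.
Proof.
move=> ltnN; rewrite [RHS](big_cat_nat (leq0n n.+1) ltnN) /=.
rewrite [X in _ = _ + X]big_nat_cond [X in _ = _ + X]big1 ?addr0 //.
by move=> k /andP[/andP[ltnk _] _]; rewrite stirling2_small // mul0n mul0r.
Qed.

Lemma stirling_fact_sumS n N c : (n < N)%N ->
  stirling_fact_sum n.+1 c =
  \sum_(0 <= k < N) (stirling2 n.+1 k.+1 * k.+1`!)%:R * c k.+1.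
Proof.
move=> ltnN; rewrite (stirling_fact_sum_widen c (ltnN : n.+1 < N.+1)%N).
by rewrite big_nat_recl // stirling2S0 mul0n mul0r add0r.
Qed.

Lemma binomial_sum_stirling_fact_sum n N c : (n < N)%N ->
  \sum_(0 <= j < n.+1) 'C(n, j)%:R * stirling_fact_sum j c =
  \sum_(0 <= k < N) (stirling2 n.+1 k.+1 * k`!)%:R * c k.
Proof.
move=> ltnN.
under eq_big_nat => j /andP[_ ltjn].
  rewrite (stirling_fact_sum_widen c (leq_trans ltjn ltnN)) mulr_sumr.
  over.
rewrite exchange_big_nat; apply: eq_bigr => k _.
rewrite -stirling2_binomial_sum big_distrl natr_sum mulr_suml.
by apply: eq_bigr => j _; rewrite !natrM !mulrA.
Qed.

End StirlingFactSum.

Section HarmonicGeometric.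

Variables (R : numFieldType) (x : R).

Lemma harmonic0 : harmonic 0 = 0 :> R.
Proof. by rewrite /harmonic big_geq. Qed.

Lemma harmonicS k : harmonic k.+1 = harmonic k + k.+1%:R^-1 :> R.
Proof. by rewrite /harmonic big_nat_recr. Qed.

Lemma geom_polyE n : geom_poly n x = stirling_fact_sum n (fun k => x ^+ k).
Proof. by []. Qed.

Lemma harm_geom_poly0 : harm_geom_poly 0 x = 0.
Proof. by rewrite /harm_geom_poly big_geq. Qed.

Lemma harm_geom_polyE n :
  harm_geom_poly n x = stirling_fact_sum n (fun k => harmonic k * x ^+ k).
Proof.
rewrite /stirling_fact_sum big_ltn // harmonic0 mul0r mulr0 add0r.
by apply: eq_bigr => k _; rewrite mulrA.
Qed.

Lemma binomial_sum_geom_poly n :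
  x * \sum_(0 <= k < n.+2) 'C(n.+1, k)%:R * geom_poly k x = (x + 1) * geom_poly n.+1 x.
Proof.
have split_term k : x * ((stirling2 n.+2 k.+1 * k`!)%:R * x ^+ k) =
    (stirling2 n.+1 k.+1 * k.+1`!)%:R * x ^+ k.+1 +
    x * ((stirling2 n.+1 k * k`!)%:R * x ^+ k).
  by rewrite stirling2S_fact natrD exprS; ring.
under eq_bigr do rewrite geom_polyE.
rewrite (binomial_sum_stirling_fact_sum _ (ltnSn n.+1)) mulr_sumr.
rewrite (eq_bigr _ (fun k _ => split_term k)) big_split -mulr_sumr.
rewrite mulrDl mul1r addrC geom_polyE; congr (_ + _).
by rewrite (stirling_fact_sumS _ (leqnSn n.+1)).
Qed.

Lemma binomial_sum_harm_geom_poly n :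
  x * \sum_(0 <= k < n.+2) 'C(n.+1, k)%:R * harm_geom_poly k x =
  (x + 1) * harm_geom_poly n.+1 x - x * \sum_(0 <= k < n.+1) 'C(n, k)%:R * geom_poly k x.
Proof.
(* Written as a difference so that sumrB alone splits the sum into ring terms. *)
have split_term k : x * ((stirling2 n.+2 k.+1 * k`!)%:R * (harmonic k * x ^+ k)) =
    (stirling2 n.+1 k.+1 * k.+1`!)%:R * (harmonic k.+1 * x ^+ k.+1) -
    x * ((stirling2 n.+1 k.+1 * k`!)%:R * x ^+ k -
         (stirling2 n.+1 k * k`!)%:R * (harmonic k * x ^+ k)).
  rewrite stirling2S_fact harmonicS factS natrD !natrM exprS.
  by field; rewrite addrC natr1 pnatr_eq0.
under eq_bigr do rewrite harm_geom_polyE.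
under [in RHS]eq_bigr do rewrite geom_polyE.
rewrite (binomial_sum_stirling_fact_sum _ (ltnSn n.+1)) mulr_sumr.
rewrite (binomial_sum_stirling_fact_sum _ (leqnSn n.+1)).
rewrite (eq_bigr _ (fun k _ => split_term k)) sumrB -mulr_sumr sumrB.
rewrite -(stirling_fact_sumS (fun k => harmonic k * x ^+ k) (leqnSn n.+1)).
rewrite -/(stirling_fact_sum n.+1 (fun k => harmonic k * x ^+ k)) -harm_geom_polyE.
ring.
Qed.

End HarmonicGeometric.

Theorem proposition1 (R : numFieldType) (n : nat) (x : R) :
  (2 <= n)%N ->
  x * (\sum_(1 <= k < n.+1) 'C(n, k)%:R * harm_geom_poly k x)
  = (x + 1) * harm_geom_poly n x - (x + 1) * geom_poly n.-1 x.
Proof.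
case: n => [|[|n]] // _.
have -> : \sum_(1 <= k < n.+3) 'C(n.+2, k)%:R * harm_geom_poly k x =
          \sum_(0 <= k < n.+3) 'C(n.+2, k)%:R * harm_geom_poly k x.
  by rewrite [RHS]big_ltn // harm_geom_poly0 mulr0 add0r.
by rewrite binomial_sum_harm_geom_poly binomial_sum_geom_poly.
Qed.
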